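(* Let $G$ be a reaction network whose stoichiometric subspace is one-dimensional, and suppose $cap_{pos}(G)<+\infty$. Then there exist a rate-constant vector $\kappa$ and a total-constant vector $c$ such that $G$ has $cap_{pos}(G)$ positive steady states in the stoichiometric compatibility class $\mathcal P_c$, of which $cap_{stab}(G)$ are stable.
   Context: A reaction network $G$ has species $X_1,\dots,X_s$ and $m$ reactions $\sum_{i}\alpha_{ij}X_i\to\sum_i\beta_{ij}X_i$ ($j=1,\dots,m$), with $\alpha_{ij},\beta_{ij}\in\mathbb Z_{\ge0}$ and $(\alpha_{1j},\dots,\alpha_{sj})\neq(\beta_{1j},\dots,\beta_{sj})$. The stoichiometric matrix $\mathcal N$ has entries $\beta_{ij}-\alpha_{ij}$; its image $S$ is the stoichiometric subspace. For $\kappa\in\mathbb R^m_{>0}$, mass-action kinetics gives $\dot x=f(\kappa;x)=\mathcal N(\kappa_1\prod_i x_i^{\alpha_{i1}},\dots,\kappa_m\prod_i x_i^{\alpha_{im}})^\top$. When $S$ is one-dimensional, species are labelled so that $\beta_{11}-\alpha_{11}\ne0$, and for $c\in\mathbb R^{s-1}$ the stoichiometric compatibility class is $\mathcal P_c=\{x\in\mathbb R^s_{\ge0}:(\beta_{i1}-\alpha_{i1})x_1-(\beta_{11}-\alpha_{11})x_i=c_{i-1},\ i=2,\dots,s\}$. A steady state is $x\in\mathbb R^s_{\ge0}$ with $f(\kappa;x)=0$; positive if $x\in\mathbb R^s_{>0}$; nondegenerate if $\mathrm{Jac}_f(x)(S)=S$; stable if nondegenerate and all nonzero eigenvalues of $\mathrm{Jac}_f(x)$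 have negative real parts. $G$ admits $N$ (resp. stable) positive steady states if for some $\kappa$ and $c$ it has $N$ such positive steady states in $\mathcal P_c$; $cap_{pos}(G)$ and $cap_{stab}(G)$ are the maxima of such $N$ in $\mathbb Z_{\ge0}\cup\{+\infty\}$. *)

From HB Require Import structures.
From mathcomp Require Import all_boot all_order all_algebra.
From mathcomp Require Import reals.
From mathcomp.real_closed Require Import complex.
Set Implicit Arguments. Unset Strict Implicit. Unset Printing Implicit Defensive.
Import Order.TTheory GRing.Theory Num.Theory.
Local Open Scope ring_scope.

(* A reaction network with n species X_0..X_{n-1} and m reactions is given by
   the reactant / product complexes alpha, beta : 'M[nat]_(n, m) (column j is
   the reaction j).  Index 0 plays the role of the paper's index 1. *)
Definition is_network (n m : nat) (alpha beta : 'M[nat]_(n, m)) : Prop :=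
  forall j : 'I_m, exists i : 'I_n, alpha i j <> beta i j.

Section MassAction.
Variables (R : realType) (n m : nat) (alpha beta : 'M[nat]_(n, m)).

Definition stoich : 'M[R]_(n, m) :=
  \matrix_(i, j) ((beta i j)%:R - (alpha i j)%:R).

(* the stoichiometric subspace S = Im N, as a row space (rows of N^T) *)
Definition stoich_dim : nat := \rank (stoich^T).

Definition monom (j : 'I_m) (x : 'cV[R]_n) : R :=
  \prod_(i < n) x i 0 ^+ alpha i j.

Definition dmonom (j : 'I_m) (k : 'I_n) (x : 'cV[R]_n) : R :=
  (alpha k j)%:R * x k 0 ^+ (alpha k j).-1 *
  \prod_(i < n | i != k) x i 0 ^+ alpha i j.

Definition mass_action (kappa : 'cV[R]_m) (x : 'cV[R]_n) : 'cV[R]_n :=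
  stoich *m \col_j (kappa j 0 * monom j x).

Definition jac (kappa : 'cV[R]_m) (x : 'cV[R]_n) : 'M[R]_n :=
  \matrix_(i, k) \sum_(j < m) stoich i j * kappa j 0 * dmonom j k x.

Definition pos_vec (p : nat) (v : 'cV[R]_p) : Prop := forall i, 0 < v i 0.
Definition nonneg_vec (p : nat) (v : 'cV[R]_p) : Prop := forall i, 0 <= v i 0.

Definition steady_state (kappa : 'cV[R]_m) (x : 'cV[R]_n) : Prop :=
  nonneg_vec x /\ mass_action kappa x = 0.

Definition pos_steady_state (kappa : 'cV[R]_m) (x : 'cV[R]_n) : Prop :=
  steady_state kappa x /\ pos_vec x.

(* nondegenerate: Jac_f(x)(S) = S.  With S the row space of N^T, the image
   J(S) is the row space of N^T J^T. *)
Definition nondegenerate (kappa : 'cV[R]_m) (x : 'cV[R]_n) : bool :=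
  (stoich^T *m (jac kappa x)^T == stoich^T)%MS.

Definition stable (kappa : 'cV[R]_m) (x : 'cV[R]_n) : Prop :=
  nondegenerate kappa x /\
  forall lam : R[i],
    eigenvalue (map_mx (fun r : R => (r%:C)%C) (jac kappa x)) lam ->
    lam != 0 -> complex.Re lam < 0.

Definition has_card (T : eqType) (P : T -> Prop) (k : nat) : Prop :=
  exists s : seq T, [/\ uniq s, forall x, P x <-> x \in s & size s = k].

End MassAction.

Section OneDim.
Variables (R : realType) (s m : nat) (alpha beta : 'M[nat]_(s.+1, m.+1)).
(* One-dimensional case; species/reactions labelled so that
   beta_{11} - alpha_{11} <> 0 (here: index ord0).  For c in R^{s}
   (the paper's R^{s-1} with s+1 species here), the stoichiometric
   compatibility class P_c: *)
Definition compat_class (c : 'cV[R]_s) (x : 'cV[R]_s.+1) : Prop :=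
  nonneg_vec x /\
  forall i : 'I_s,
    stoich R alpha beta (lift ord0 i) ord0 * x ord0 0
    - stoich R alpha beta ord0 ord0 * x (lift ord0 i) 0 = c i 0.

Definition pos_ss_in (kappa : 'cV[R]_m.+1) (c : 'cV[R]_s) (x : 'cV[R]_s.+1)
  : Prop := pos_steady_state alpha beta kappa x /\ compat_class c x.

Definition stab_pos_ss_in (kappa : 'cV[R]_m.+1) (c : 'cV[R]_s)
  (x : 'cV[R]_s.+1) : Prop :=
  pos_ss_in kappa c x /\ stable alpha beta kappa x.

Definition admits (P : 'cV[R]_m.+1 -> 'cV[R]_s -> 'cV[R]_s.+1 -> Prop)
  (k : nat) : Prop :=
  exists kappa c, pos_vec kappa /\ has_card (P kappa c) k.

Definition admits_inf (P : 'cV[R]_m.+1 -> 'cV[R]_s -> 'cV[R]_s.+1 -> Prop)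
  : Prop :=
  exists kappa c, pos_vec kappa /\ ~ (exists k, has_card (P kappa c) k).

Definition capacity_is (P : 'cV[R]_m.+1 -> 'cV[R]_s -> 'cV[R]_s.+1 -> Prop)
  (N : nat) : Prop :=
  ~ admits_inf P /\ admits P N /\ forall k, admits P k -> (k <= N)%N.

Definition cap_pos_is (N : nat) : Prop := capacity_is pos_ss_in N.
Definition cap_stab_is (N : nat) : Prop := capacity_is stab_pos_ss_in N.

End OneDim.

From Pilot Require Import Defs.
From HB Require Import structures.
From mathcomp Require Import all_boot all_order all_algebra.
From mathcomp Require Import reals.
From mathcomp.real_closed Require Import complex polyrcf.
From mathcomp Require Import ring lra zify.
From Stdlib Require Import Classical.
Set Implicit Arguments. Unset Strict Implicit. Unset Printing Implicit Defensive.
Import Order.TTheory GRing.Theory Num.Theory.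
Local Open Scope ring_scope.

(* When the stoichiometric subspace is the line spanned by v, the mass-action
   field is f = g v for a scalar function g, and parametrizing P_c as x = b + t v
   turns the positive steady states in P_c into the roots of the polynomial
   h(t) = g(b + t v) in the open interval where b + t v > 0; such a root is
   nondegenerate iff h'(t) <> 0 and stable iff h'(t) < 0.  Two consecutive
   simple roots cannot have slopes of the same sign, so among N roots at most
   (N+1)/2 are stable, and at least (N-1)/2 when all of them are simple.
   Perturbing kappa_0 adds a small multiple of a positive monomial to h; with the
   right sign this makes every root simple without losing any, so some
   configuration has N = cap_pos simple roots and at least (N-1)/2 stable ones.
   Either that configuration realizes cap_stab, or cap_stab exceeds its stable
   count and any configuration realizing cap_stab has at least
   2 cap_stab - 1 >= N roots, hence exactly N. *)

Section Enumeration.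
Variable T : eqType.
Implicit Types (P : T -> Prop) (s : seq T).

Definition enumerates P s : Prop := uniq s /\ forall x, P x <-> x \in s.

Lemma has_cardP P k : has_card P k <-> exists2 s, enumerates P s & size s = k.
Proof. by split=> [[s [us Ps <-]]|[s [us Ps] <-]]; exists s. Qed.

Lemma enumerates_perm P s s' : enumerates P s -> perm_eq s s' -> enumerates P s'.
Proof.
move=> [us Ps] ss'; split=> [|x]; first by rewrite -(perm_uniq ss').
by rewrite -(perm_mem ss').
Qed.

Lemma enumerates_size P s s' : enumerates P s -> enumerates P s' -> size s = size s'.
Proof.
move=> [us Ps] [us' Ps']; apply/perm_size/uniq_perm => // x.
by apply/idP/idP => [/Ps/Ps'|/Ps'/Ps].
Qed.

Lemma has_card_unique P k k' : has_card P k -> has_card P k' -> k = k'.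
Proof.
by move=> [s [us Ps <-]] [s' [us' Ps' <-]]; apply: (@enumerates_size P); split.
Qed.

Lemma enumerates_filter P (a : pred T) s :
  enumerates P s -> enumerates (fun x => P x /\ a x) (filter a s).
Proof.
move=> [us Ps]; split=> [|x]; first exact: filter_uniq.
by rewrite mem_filter andbC; split=> [[/Ps -> ->]|/andP[/Ps ? ?]].
Qed.

End Enumeration.

Lemma has_card_image (T U : eqType) (P : T -> Prop) (Q : U -> Prop)
    (f : T -> U) (g : U -> T) k :
  cancel f g -> (forall x, Q x <-> exists2 t, x = f t & P t) ->
  has_card Q k <-> has_card P k.
Proof.
move=> fK QP; have f_inj := can_inj fK.
have Qf t : Q (f t) <-> P t.
  by split=> [/QP[t' /f_inj -> //]|Pt]; apply/QP; exists t.
rewrite !has_cardP; split=> -[s [us Ps] <-].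
  exists (map g s); last by rewrite size_map.
  split=> [|t].
    rewrite map_inj_in_uniq // => x y /Ps/QP[t -> _] /Ps/QP[t' -> _].
    by rewrite !fK => ->.
  split=> [/Qf/Ps fts|/mapP[x /Ps/QP[t' -> Pt'] ->]]; last by rewrite fK.
  by apply/mapP; exists (f t); rewrite ?fK.
exists (map f s); last by rewrite size_map.
split=> [|x]; first by rewrite map_inj_uniq.
split=> [/QP[t -> /Ps ts]|/mapP[t /Ps Pt ->]]; first exact: map_f.
exact/Qf.
Qed.

Lemma exists_max_nat (P : nat -> Prop) N :
  (exists k, P k) -> (forall k, P k -> (k <= N)%N) ->
  exists2 K, P K & forall k, P k -> (k <= K)%N.
Proof.
elim: N => [|N IH] [k Pk] le_N.
  by exists k => // k' /le_N; rewrite leqn0 => /eqP->.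
have [PN|nPN] := classic (P N.+1); first by exists N.+1.
apply: IH => [|k' Pk']; first by exists k.
have := le_N k' Pk'; rewrite leq_eqVlt => /predU1P[Ek'|//].
by rewrite Ek' in Pk'.
Qed.

Lemma count_sorted_nand (T : Type) (a : pred T) (s : seq T) :
  sorted (fun x y => ~~ (a x && a y)) s -> ((count a s).*2 <= (size s).+1)%N.
Proof.
have path_bound x s' : path (fun x y => ~~ (a x && a y)) x s' ->
    ((count a (x :: s')).*2 <= size (x :: s') + a x)%N.
  elim: s' x => [|y s' IH] x /=; first by case: (a x).
  case/andP=> nxy /IH /=; move: nxy; rewrite -!muln2.
  by case: (a x); case: (a y) => //= _; lia.
case: s => //= x s' /path_bound /=; rewrite -!muln2; case: (a x) => /=; lia.
Qed.

Lemma deriv_prod_seq (R : comNzRingType) (I : eqType) (r : seq I) (F : I -> {poly R}) :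
  uniq r ->
  (\prod_(i <- r) F i)^`() = \sum_(k <- r) (F k)^`() * \prod_(i <- r | i != k) F i.
Proof.
elim: r => [|a r IH] /=; first by rewrite !big_nil -polyC1 derivC.
case/andP=> ar ur; rewrite !big_cons derivM IH // eqxx /= mulr_sumr.
congr (_ * _ + _).
  rewrite big_seq_cond [RHS]big_seq_cond; apply: eq_bigl => i.
  by case: (boolP (i \in r)) => //= ir; apply/esym/eqP => ai; rewrite -ai ir in ar.
rewrite [LHS]big_seq [RHS]big_seq; apply: eq_bigr => k kr.
rewrite big_cons; case: eqP => /= [ak|_]; first by rewrite ak kr in ar.
by rewrite mulrCA.
Qed.

Section RealPolynomials.
Variable R : rcfType.
Implicit Types (h p : {poly R}) (a b e t u v y : R).

Lemma exists_pos_notin (B : seq R) e :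
  0 < e -> exists y, [/\ 0 < y, y <= e & y \notin B].
Proof.
move=> e_gt0; pose m := \big[Num.min/e]_(b <- B | 0 < b) b.
have m_gt0 : 0 < m by rewrite /m; elim/big_ind: _ => // x y; rewrite lt_min => -> ->.
have m_le : m <= e by exact: bigmin_le_id.
exists (m / 2); split; [lra | lra |].
apply/negP => mB; suff : m <= m / 2 by lra.
by rewrite {1}/m; apply: ge_bigmin_seq mB _; lra.
Qed.

Lemma exists_common_radius (T : eqType) (P : T -> R -> Prop) (s : seq T) :
  (forall i d d', 0 < d' -> d' <= d -> P i d -> P i d') ->
  {in s, forall i, exists2 d, 0 < d & P i d} ->
  exists2 d, 0 < d & {in s, forall i, P i d}.
Proof.
move=> P_shrink; elim: s => [|i s IH] Ps; first by exists 1.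
have [d1 d1_gt0 Pd1] := Ps i (mem_head _ _).
have [d2 d2_gt0 Pd2] : exists2 d, 0 < d & {in s, forall j, P j d}.
  by apply: IH => j js; apply: Ps; rewrite inE js orbT.
have d_gt0 : 0 < Num.min d1 d2 by rewrite lt_min d1_gt0.
exists (Num.min d1 d2) => // j; rewrite inE => /predU1P[->|js].
  by apply: P_shrink Pd1; rewrite // ge_min lexx.
by apply: P_shrink (Pd2 j js); rewrite // ge_min lexx orbT.
Qed.

Lemma mul_gt0_near u v : `|u - v| < `|v| -> 0 < u * v.
Proof.
rewrite ltr_norml; case: (ltrgtP v 0) => [v_lt0|v_gt0|->].
- by rewrite ltr0_norm //; nra.
- by rewrite gtr0_norm //; nra.
- by rewrite normr0; lra.
Qed.

Lemma sign_stable_small_perturbation v u :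
  v != 0 -> 0 < u -> exists2 e, 0 < e & forall y, `|y| <= e -> 0 < (v + y * u) * v.
Proof.
move=> v_neq0 u_gt0; have v_gt0 : 0 < `|v| by rewrite normr_gt0.
have u2_gt0 : 0 < 2 * u by rewrite mulr_gt0.
exists (`|v| / (2 * u)) => [|y]; first by rewrite divr_gt0.
rewrite ler_pdivlMr // => y_small; apply: mul_gt0_near.
by rewrite addrAC subrr add0r normrM (gtr0_norm u_gt0); lra.
Qed.

Lemma sign_change_pair (H A1 A2 B1 B2 : R) :
  0 < A1 * H -> 0 < A2 * H -> 0 < B1 -> B2 < 0 ->
  ((A1 * B1 < 0)%R + (A2 * B2 < 0)%R)%N = 1%N.
Proof.
move=> A1H A2H B1_gt0 B2_lt0; case: (ltrgtP H 0) => [H_lt0|H_gt0|H0].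
- have -> : A1 * B1 < 0 by nra.
  by have -> : (A2 * B2 < 0) = false by apply/negbTE; rewrite -leNgt; nra.
- have -> : (A1 * B1 < 0) = false by apply/negbTE; rewrite -leNgt; nra.
  by have -> : A2 * B2 < 0 by nra.
- by move: A1H; rewrite H0 mulr0 ltxx.
Qed.

Lemma sign_near_simple_root h a :
  h.[a] = 0 -> h^`().[a] != 0 ->
  exists2 e, 0 < e & forall t, `|t - a| < e -> t != a -> 0 < h.[t] * h^`().[a] * (t - a).
Proof.
move=> ha h'a; have /factor_theorem[q hq] : root h a by apply/eqP.
have h'aE : h^`().[a] = q.[a].
  by rewrite hq derivM derivXsubC !hornerE subrr; ring.
have qa_gt0 : 0 < `|q.[a]| by rewrite normr_gt0 -h'aE.
have [e e_gt0 qe] := poly_cont a q qa_gt0.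
exists e => // t /qe /mul_gt0_near qq ta; rewrite h'aE hq !hornerE.
have ta2 : 0 < (t - a) ^+ 2 by rewrite exprn_even_gt0 //= subr_eq0.
have -> : q.[t] * (t - a) * q.[a] * (t - a) = q.[t] * q.[a] * (t - a) ^+ 2 by ring.
exact: mulr_gt0.
Qed.

Lemma root_between_simple_roots h a b :
  a < b -> h.[a] = 0 -> h.[b] = 0 -> 0 < h^`().[a] * h^`().[b] ->
  exists r, [/\ a < r, r < b & h.[r] = 0].
Proof.
move=> ab ha hb h'ab.
have h'a : h^`().[a] != 0 by apply: contraTneq h'ab => ->; rewrite mul0r ltxx.
have h'b : h^`().[b] != 0 by apply: contraTneq h'ab => ->; rewrite mulr0 ltxx.
have [ea ea_gt0 near_a] := sign_near_simple_root ha h'a.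
have [eb eb_gt0 near_b] := sign_near_simple_root hb h'b.
have [d [d_gt0 da db dab]] : exists d, [/\ 0 < d, d < ea, d < eb & 2 * d < b - a].
  set mu := Num.min (Num.min ea eb) (b - a).
  have : 0 < mu by rewrite !lt_min ea_gt0 eb_gt0 subr_gt0 ab.
  have : [/\ mu <= ea, mu <= eb & mu <= b - a] by rewrite !ge_min !lexx !orbT.
  by case=> *; exists (mu / 3); split; lra.
have sa : 0 < h.[a + d] * h^`().[a] * d.
  have := near_a (a + d); rewrite addrAC subrr add0r gtr0_norm //.
  by apply=> //; apply/eqP; lra.
have sb : 0 < h.[b - d] * h^`().[b] * - d.
  have := near_b (b - d); rewrite addrAC subrr add0r normrN gtr0_norm //.
  by apply=> //; apply/eqP; lra.
have opp : h.[a + d] * h.[b - d] < 0.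
  have := mulr_gt0 sa sb.
  have -> : h.[a + d] * h^`().[a] * d * (h.[b - d] * h^`().[b] * - d) =
    - (h.[a + d] * h.[b - d]) * (h^`().[a] * h^`().[b] * d ^+ 2) by ring.
  by rewrite pmulr_lgt0 ?oppr_gt0 // mulr_gt0 // exprn_gt0.
have ab' : a + d <= b - d by lra.
have [r] := poly_ivtoo ab' opp.
rewrite in_itv /= => /andP[r1 r2] /rootP hr.
by exists r; split => //; lra.
Qed.

Lemma wronskian_neq0 h p a :
  h != 0 -> h.[a] = 0 -> p.[a] != 0 -> h^`() * p - h * p^`() != 0.
Proof.
move=> h_neq0 ha pa.
have [k [q qa hq]] := multiplicity_XsubC h a.
move: qa; rewrite h_neq0 /= => qa.
case: k hq => [|k] hq; first by move: qa; rewrite /root -ha hq expr0 mulr1 eqxx.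
set L := 'X - a%:P in hq.
have -> : h^`() * p - h * p^`() =
    L ^+ k * (L * (q^`() * p - q * p^`()) + k.+1%:R *: (q * p)).
  rewrite hq derivM deriv_exp /L derivXsubC mul1r.
  by rewrite exprS -mulr_natl scalerAl -mul_polyC polyCMn polyC1; ring.
rewrite mulf_eq0 negb_or expf_neq0 ?polyXsubC_eq0 //=.
apply/negP => /eqP/(congr1 (horner^~ a))/eqP.
rewrite !hornerE subrr mul0r add0r !mulf_eq0 pnatr_eq0 (negbTE pa) orbF /=.
by apply/negP.
Qed.

End RealPolynomials.

Section RootsOnInterval.
Variables (R : rcfType) (I : R -> Prop).
Hypothesis I_convex : forall a b r, I a -> I b -> a <= r -> r <= b -> I r.
Implicit Types (h F : {poly R}) (a b d t : R) (S : seq R).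

Definition root_in h t : Prop := I t /\ h.[t] = 0.

Definition slopes_alternate h a b : bool := ~~ (0 < h^`().[a] * h^`().[b]).

Lemma path_roots_alternate h x s :
  path <%R x s -> {in x :: s, forall t, root_in h t} ->
  (forall r, root_in h r -> x < r -> r \in s) -> path (slopes_alternate h) x s.
Proof.
elim: s x => [//|y s IH] x /= /andP[xy ys] roots above.
have [[Ix hx] [Iy hy]] : root_in h x /\ root_in h y.
  by split; apply: roots; rewrite !inE eqxx ?orbT.
apply/andP; split.
  apply/negP => /(root_between_simple_roots xy hx hy)[r [xr ry hr]].
  have /above : root_in h r by split=> //; apply: I_convex Ix Iy _ _; apply: ltW.
  case/(_ xr)/predU1P => [rE|rs]; first by move: ry; rewrite rE ltxx.
  by move: (allP (order_path_min lt_trans ys) r rs); rewrite ltNge (ltW ry).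
apply: IH => // [t ts|r rr yr]; first by apply: roots; rewrite inE ts orbT.
have /predU1P[rE|//] := above r rr (lt_trans xy yr).
by move: yr; rewrite rE ltxx.
Qed.

Lemma sorted_roots_alternate h S :
  enumerates (root_in h) S -> sorted <%R S -> sorted (slopes_alternate h) S.
Proof.
case: S => [//|x s] [_ rootsS] /= xs.
apply: path_roots_alternate => // [t /rootsS //|r /rootsS].
by rewrite inE => /predU1P[->|//]; rewrite ltxx.
Qed.

Lemma sort_roots_alternate h S :
  enumerates (root_in h) S -> sorted (slopes_alternate h) (sort <=%R S).
Proof.
move=> rootsS; apply: sorted_roots_alternate; last by rewrite sort_lt_sorted rootsS.1.
by apply: enumerates_perm rootsS _; rewrite perm_sym perm_sort.
Qed.

Lemma count_stable_roots_le h S : enumerates (root_in h) S ->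
  ((count (fun t => h^`().[t] < 0)%R S).*2 <= (size S).+1)%N.
Proof.
move=> /sort_roots_alternate alt; have pS := permEl (perm_sort <=%R S).
rewrite -(perm_size pS) -(permP pS); apply: count_sorted_nand.
by apply: sub_sorted alt => a b; apply: contra => /andP[a_lt0 b_lt0]; rewrite nmulr_rgt0.
Qed.

Lemma size_roots_le_stable h S : enumerates (root_in h) S ->
  {in S, forall t, h^`().[t] != 0} ->
  (size S <= (count (fun t => h^`().[t] < 0)%R S).*2.+1)%N.
Proof.
move=> /sort_roots_alternate alt simple; have pS := permEl (perm_sort <=%R S).
have unstable_le : ((count (fun t => 0 < h^`().[t])%R S).*2 <= (size S).+1)%N.
  rewrite -(perm_size pS) -(permP pS); apply: count_sorted_nand.
  by apply: sub_sorted alt => a b; apply: contra => /andP[a_gt0 b_gt0]; rewrite mulr_gt0.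
have split_count :
    (count (fun t => 0 < h^`().[t])%R S + count (fun t => h^`().[t] < 0)%R S)%N = size S.
  rewrite -(count_predC (fun t => h^`().[t] < 0)%R) addnC; congr (_ + _)%N.
  by apply: eq_in_count => t /simple h't /=; rewrite -leNgt le_eqVlt eq_sym (negbTE h't).
move: unstable_le split_count; rewrite -!muln2; lia.
Qed.

Definition sign_change F a b : bool := F.[a] * F.[b] < 0.

Lemma root_in_sign_change F a b :
  I a -> I b -> a <= b -> sign_change F a b -> exists x, [/\ a < x, x < b & root_in F x].
Proof.
move=> Ia Ib ab /(poly_ivtoo ab)[x]; rewrite in_itv /= => /andP[ax xb] /rootP Fx.
by exists x; split=> //; split=> //; apply: I_convex Ia Ib _ _; apply: ltW.
Qed.

Lemma roots_around F t d : 0 < d -> I (t - d) -> I (t + d) ->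
  exists L, [/\ uniq L,
    size L = (sign_change F (t - d) t + sign_change F t (t + d))%N
  & {in L, forall x, root_in F x /\ `|x - t| < d}].
Proof.
move=> d_gt0 Il Ir; have It : I t by apply: I_convex Il Ir _ _; lra.
have near x : t - d < x -> x < t + d -> `|x - t| < d by rewrite ltr_norml; lra.
case: (boolP (sign_change F (t - d) t)) => [/(root_in_sign_change Il It)[|x [lx xt Fx]]|_];
  first lra;
case: (boolP (sign_change F t (t + d))) => [/(root_in_sign_change It Ir)[|y [ty yr Fy]]|_];
  do ?lra.
- exists [:: x; y]; split=> [|//|z]; first by rewrite /= inE andbT; apply/eqP; lra.
  by rewrite !inE => /orP[]/eqP->; split=> //; apply: near; lra.
- by exists [:: x]; split=> // z; rewrite inE => /eqP->; split=> //; apply: near; lra.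
- by exists [:: y]; split=> // z; rewrite inE => /eqP->; split=> //; apply: near; lra.
- by exists [::].
Qed.

Definition sign_changes_around F d S : nat :=
  \sum_(t <- S) (sign_change F (t - d) t + sign_change F t (t + d)).

Lemma roots_around_seq F d S : 0 < d -> uniq S ->
  {in S, forall t, I (t - d) /\ I (t + d)} ->
  {in S &, forall t t', t != t' -> 2 * d <= `|t - t'|} ->
  exists L, [/\ uniq L, size L = sign_changes_around F d S
  & {in L, forall x, root_in F x /\ exists2 t, t \in S & `|x - t| < d}].
Proof.
move=> d_gt0; elim: S => [|t S IH] /= uS I_S sep.
  by exists [::]; rewrite /sign_changes_around big_nil.
case/andP: uS => tS uS.
have [L [uL sizeL rootsL]] : exists L, [/\ uniq L, size L = sign_changes_around F d S
    & {in L, forall x, root_in F x /\ exists2 t, t \in S & `|x - t| < d}].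
  apply: IH => // [u uS'|u u' uS' u'S]; first by apply: I_S; rewrite inE uS' orbT.
  by apply: sep; rewrite inE ?uS' ?u'S orbT.
have [Il Ir] := I_S t (mem_head _ _).
have [L0 [uL0 sizeL0 rootsL0]] := roots_around F d_gt0 Il Ir.
exists (L0 ++ L); split.
- rewrite cat_uniq uL0 uL andbT /=; apply/hasPn => x /rootsL[_ [u uS' xu]].
  apply/negP => /rootsL0[_ xt].
  have tu : t != u by apply: contraNneq tS => ->.
  have := sep t u (mem_head _ _) _ tu; rewrite inE uS' orbT => /(_ isT).
  by have := ler_distD x t u; rewrite [`|t - x|]distrC; lra.
- by rewrite size_cat sizeL0 sizeL /sign_changes_around big_cons.
- move=> x; rewrite mem_cat => /orP[/rootsL0[Fx xt]|/rootsL[Fx [u uS' xu]]].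
    by split=> //; exists t; rewrite ?mem_head.
  by split=> //; exists u; rewrite // inE uS' orbT.
Qed.

End RootsOnInterval.

Section Perturbation.
Variables (R : rcfType) (I : R -> Prop).
Hypothesis I_convex : forall a b r, I a -> I b -> a <= r -> r <= b -> I r.
Hypothesis I_open : forall t, I t -> exists2 d, 0 < d & forall t', `|t' - t| < d -> I t'.
Variables (h p : {poly R}) (S : seq R).
Hypothesis p_gt0 : forall t, I t -> 0 < p.[t].
Hypothesis rootsS : enumerates (root_in I h) S.
Hypothesis S_neq0 : S != [::].

Let some_root : exists t0, root_in I h t0.
Proof. by case: S S_neq0 rootsS => // t0 s _ [_ roots]; exists t0; apply/roots/mem_head. Qed.

Lemma isolated_roots_poly_neq0 : h != 0.
Proof.
have [t0 [It0 _]] := some_root.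
have [d d_gt0 ball] := I_open It0.
have d2_gt0 : 0 < d / 2 by lra.
have [y [y_gt0 y_le yS]] := exists_pos_notin [seq t - t0 | t <- S] d2_gt0.
apply/eqP => h0; move/mapP: yS; apply; exists (t0 + y); last by rewrite addrAC subrr add0r.
apply/rootsS.2; split; last by rewrite h0 horner0.
by apply: ball; rewrite addrAC subrr add0r gtr0_norm //; lra.
Qed.

(* A multiple root t of h + y p is a root of the Wronskian h' p - h p', and
   then y = - h(t) / p(t). *)
Lemma simple_roots_off_finite : exists B : seq R, forall y, y \notin B ->
  forall t, root_in I (h + y *: p) t -> (h + y *: p)^`().[t] != 0.
Proof.
have [t0 [It0 ht0]] := some_root.
set W := h^`() * p - h * p^`().
have W_neq0 : W != 0.
  exact: wronskian_neq0 isolated_roots_poly_neq0 ht0 (lt0r_neq0 (p_gt0 It0)).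
exists [seq - h.[t] / p.[t] | t <- rootsR W] => y yB t [It hy].
rewrite hornerD hornerZ in hy; rewrite derivD derivZ hornerD hornerZ.
apply: contra yB => /eqP h'y; have pt := lt0r_neq0 (p_gt0 It).
have hE : h.[t] = - (y * p.[t]) by lra.
have h'E : h^`().[t] = - (y * p^`().[t]) by lra.
apply/mapP; exists t; last by rewrite hE opprK mulfK.
rewrite -(roots_on_rootsR W_neq0) in_itv /= /root /W !hornerE hE h'E.
by apply/eqP; ring.
Qed.

Definition separating d : Prop := {in S, forall t,
  [/\ I (t - d), I (t + d) & {in S, forall t', t != t' -> 2 * d <= `|t - t'|}]}.

Lemma exists_separating : exists2 d, 0 < d & separating d.
Proof.
pose P t d := (forall u, `|u - t| <= d -> I u) /\
  {in S, forall t', t != t' -> 2 * d <= `|t - t'|}.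
have [d d_gt0 Pd] : exists2 d, 0 < d & {in S, forall t, P t d}.
  apply: exists_common_radius => [t d d' _ d'd [ball gap]|t tS].
    split=> [u ut|t' t'S tt']; first by apply: ball; apply: le_trans d'd.
    by apply: le_trans (gap t' t'S tt'); lra.
  have [d0 d0_gt0 ball] := I_open ((rootsS.2 t).2 tS).1.
  have [d1 d1_gt0 gap] : exists2 d1, 0 < d1 & {in S, forall t', t != t' -> 2 * d1 <= `|t - t'|}.
    apply: exists_common_radius => [t' e e' _ e'e gap tt'|t' _].
      by apply: le_trans (gap tt'); lra.
    have [<-|tt'] := eqVneq t t'; first by exists 1.
    have tt'_gt0 : 0 < `|t - t'| by rewrite normr_gt0 subr_eq0.
    by exists (`|t - t'| / 2) => [|_]; lra.
  exists (Num.min (d0 / 2) d1); first by rewrite lt_min d1_gt0 andbT; lra.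
  have [le_d0 le_d1] : Num.min (d0 / 2) d1 <= d0 / 2 /\ Num.min (d0 / 2) d1 <= d1.
    by rewrite !ge_min !lexx orbT.
  split=> [u ut|t' t'S tt']; first by apply: ball; lra.
  by apply: le_trans (gap t' t'S tt'); lra.
exists d => // t /Pd[ball gap]; split=> //; apply: ball.
  by rewrite addrAC subrr add0r normrN gtr0_norm.
by rewrite addrAC subrr add0r gtr0_norm.
Qed.

Lemma separating_ends_nonroots d : 0 < d -> separating d ->
  {in S, forall t, h.[t - d] != 0 /\ h.[t + d] != 0}.
Proof.
move=> d_gt0 sep t /[dup] tS /sep[Il Ir gap].
have off u : I u -> `|t - u| = d -> h.[u] != 0.
  move=> Iu tu; apply/eqP => hu.
  have tu' : t != u by apply: contra_eqN tu => /eqP->; rewrite subrr normr0; lra.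
  by have := gap u ((rootsS.2 u).1 (conj Iu hu)) tu'; rewrite tu; lra.
have dl : t - (t - d) = d by ring.
have dr : t - (t + d) = - d by ring.
by split; apply: off; rewrite // ?dl ?dr ?normrN gtr0_norm.
Qed.

Lemma exists_sign_preserving d : 0 < d -> separating d ->
  exists2 e, 0 < e & {in S, forall t, forall y, `|y| <= e ->
    0 < (h + y *: p).[t - d] * h.[t - d] /\ 0 < (h + y *: p).[t + d] * h.[t + d]}.
Proof.
move=> d_gt0 sep; apply: exists_common_radius => [t e e' _ e'e keep y ye'|t tS].
  by apply: keep; apply: le_trans e'e.
have [hl hr] := separating_ends_nonroots d_gt0 sep tS; have [Il Ir _] := sep t tS.
have [el el_gt0 keepl] := sign_stable_small_perturbation hl (p_gt0 Il).
have [er er_gt0 keepr] := sign_stable_small_perturbation hr (p_gt0 Ir).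
exists (Num.min el er) => [|y]; first by rewrite lt_min el_gt0.
by rewrite le_min => /andP[yl yr]; rewrite !hornerD !hornerZ; split; [apply: keepl|apply: keepr].
Qed.

(* At a root t of h, (h + y p)(t) = y p(t) has the sign of y, while at t - d
   and t + d the sign of h is kept; so each of the 2 |S| intervals changes
   sign for exactly one of y1 > 0 and y2 < 0. *)
Lemma sign_changes_around_opposite d y1 y2 : 0 < y1 -> y2 < 0 ->
  {in S, forall t, forall y, y \in [:: y1; y2] ->
    0 < (h + y *: p).[t - d] * h.[t - d] /\ 0 < (h + y *: p).[t + d] * h.[t + d]} ->
  (sign_changes_around (h + y1 *: p) d S + sign_changes_around (h + y2 *: p) d S
    = (size S).*2)%N.
Proof.
move=> y1_gt0 y2_lt0 keep.
rewrite /sign_changes_around -big_split /= -mul2n -iter_addn_0 -count_predT -big_const_seq.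
apply: eq_big_seq => t tS; have [It ht] := (rootsS.2 t).2 tS.
have at_t y : (h + y *: p).[t] = y * p.[t] by rewrite hornerD hornerZ ht add0r.
have [l1 r1] := keep t tS y1 (mem_head _ _).
have [l2 r2] := keep t tS y2 (mem_last y1 [:: y2]).
have pt := p_gt0 It.
have y1p : 0 < y1 * p.[t] by rewrite mulr_gt0.
have y2p : y2 * p.[t] < 0 by nra.
rewrite /sign_change !at_t addnACA (sign_change_pair l1 l2 y1p y2p).
by rewrite [y1 * p.[t] * _]mulrC [y2 * p.[t] * _]mulrC (sign_change_pair r1 r2 y1p y2p).
Qed.

Lemma exists_perturbation_sign_changes (B : seq R) d e : 0 < d -> separating d -> 0 < e ->
  exists y, [/\ y \notin B, `|y| <= e & (size S <= sign_changes_around (h + y *: p) d S)%N].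
Proof.
move=> d_gt0 sep e_gt0; have [e1 e1_gt0 keep] := exists_sign_preserving d_gt0 sep.
pose e' := Num.min e1 e.
have e'_gt0 : 0 < e' by rewrite lt_min e1_gt0.
have [e'_e1 e'_e] : e' <= e1 /\ e' <= e by rewrite !ge_min !lexx orbT.
have [y1 [y1_gt0 y1_le y1B]] := exists_pos_notin B e'_gt0.
have [z [z_gt0 z_le zB]] := exists_pos_notin (map -%R B) e'_gt0.
have y2B : - z \notin B by apply: contra zB => zB'; apply/mapP; exists (- z); rewrite ?opprK.
have z_neg : - z < 0 by rewrite oppr_lt0.
have keep12 : {in S, forall t, forall y, y \in [:: y1; - z] ->
    0 < (h + y *: p).[t - d] * h.[t - d] /\ 0 < (h + y *: p).[t + d] * h.[t + d]}.
  move=> t tS y; rewrite !inE => /orP[]/eqP->; apply: keep => //.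
    by rewrite gtr0_norm //; lra.
  by rewrite normrN gtr0_norm //; lra.
have sum2 := sign_changes_around_opposite y1_gt0 z_neg keep12.
case: (leqP (size S) (sign_changes_around (h + y1 *: p) d S)) => [more|less].
  by exists y1; rewrite gtr0_norm //; split=> //; lra.
exists (- z); rewrite normrN gtr0_norm //; split=> //; first lra.
move: less; rewrite -(ltn_add2r (sign_changes_around (h + - z *: p) d S)) sum2.
by rewrite -addnn ltn_add2l => /ltnW.
Qed.

Lemma perturb_to_simple_roots e0 : 0 < e0 ->
  exists y, [/\ `|y| < e0,
    exists2 L, uniq L /\ (size S <= size L)%N & {in L, forall t, root_in I (h + y *: p) t}
  & forall t, root_in I (h + y *: p) t -> (h + y *: p)^`().[t] != 0].
Proof.
move=> e0_gt0; have [B simple_off_B] := simple_roots_off_finite.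
have [d d_gt0 sep] := exists_separating.
have e_gt0 : 0 < e0 / 2 by lra.
have [y [yB y_le more]] := exists_perturbation_sign_changes B d_gt0 sep e_gt0.
have ends : {in S, forall t, I (t - d) /\ I (t + d)} by move=> t /sep[].
have gap : {in S &, forall t t', t != t' -> 2 * d <= `|t - t'|}.
  by move=> t t' /sep[_ _ gap]; apply: gap.
have [L [uL sizeL rootsL]] :=
  roots_around_seq I_convex (h + y *: p) d_gt0 rootsS.1 ends gap.
exists y; split; [lra | exists L | exact: simple_off_B]; first by rewrite sizeL.
by move=> x /rootsL[].
Qed.

End Perturbation.

Section StoichRankOne.
Variables (R : realType) (s m : nat) (alpha beta : 'M[nat]_(s.+1, m.+1)).
Hypothesis Hdim : stoich_dim R alpha beta = 1%N.
Hypothesis Hlab : stoich R alpha beta ord0 ord0 != 0.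
Local Notation N := (stoich R alpha beta).

Definition stoich_gen (i : 'I_s.+1) : R := N i ord0.
Definition stoich_coef (j : 'I_m.+1) : R := N ord0 j / N ord0 ord0.

Lemma stoich_gen0_neq0 : stoich_gen ord0 != 0. Proof. exact: Hlab. Qed.

Lemma stoich_rank1 i j : N i j = stoich_coef j * stoich_gen i.
Proof.
have row0_neq0 : row ord0 N^T != 0.
  by apply: contraNneq Hlab => /matrixP/(_ ord0 ord0); rewrite !mxE => ->.
have NT_sub : (N^T <= row ord0 N^T)%MS.
  have := mxrank_leqif_sup (row_sub ord0 N^T).
  have rankN : \rank N^T = 1%N by exact: Hdim.
  by rewrite rank_rV row0_neq0 rankN => -[_ <-].
have /sub_rVP[a colj] := submx_trans (row_sub j N^T) NT_sub.
have Nj i' : N i' j = a * N i' ord0 by move/rowP: colj => /(_ i'); rewrite !mxE.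
by rewrite /stoich_coef /stoich_gen Nj (Nj ord0) mulfK.
Qed.

Lemma stoich_coef0 : stoich_coef ord0 = 1.
Proof. exact: divff. Qed.

Definition net_rate (kappa : 'cV[R]_m.+1) (x : 'cV[R]_s.+1) : R :=
  \sum_j stoich_coef j * kappa j 0 * Defs.monom alpha j x.

Definition net_rate_grad (kappa : 'cV[R]_m.+1) (x : 'cV[R]_s.+1) (k : 'I_s.+1) : R :=
  \sum_j stoich_coef j * kappa j 0 * Defs.dmonom alpha j k x.

Definition net_rate_slope (kappa : 'cV[R]_m.+1) (x : 'cV[R]_s.+1) : R :=
  \sum_k net_rate_grad kappa x k * stoich_gen k.

Lemma mass_actionE kappa x i :
  mass_action alpha beta kappa x i 0 = stoich_gen i * net_rate kappa x.
Proof.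
rewrite mxE /net_rate mulr_sumr; apply: eq_bigr => j _.
by rewrite stoich_rank1 mxE; ring.
Qed.

Lemma mass_action_eq0 kappa x :
  mass_action alpha beta kappa x = 0 <-> net_rate kappa x = 0.
Proof.
split=> [/matrixP/(_ ord0 0)|g0].
  by rewrite mass_actionE mxE => /eqP; rewrite mulf_eq0 (negbTE stoich_gen0_neq0) => /eqP.
by apply/matrixP => i j; rewrite (ord1 j) mass_actionE g0 mxE mulr0.
Qed.

Lemma jacE kappa x i k : jac alpha beta kappa x i k = stoich_gen i * net_rate_grad kappa x k.
Proof.
rewrite mxE /net_rate_grad mulr_sumr; apply: eq_bigr => j _.
by rewrite stoich_rank1; ring.
Qed.

Lemma nondegenerateE kappa x :
  Defs.nondegenerate alpha beta kappa x = (net_rate_slope kappa x != 0).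
Proof.
have NT_neq0 : N^T != 0.
  by apply: contraNneq Hlab => /matrixP/(_ ord0 ord0); rewrite !mxE => ->.
rewrite /Defs.nondegenerate.
have -> : N^T *m (jac alpha beta kappa x)^T = net_rate_slope kappa x *: N^T.
  apply/matrixP => j i; rewrite mxE [RHS]mxE /net_rate_slope mulr_suml.
  by apply: eq_bigr => k _; rewrite ![_^T _ _]mxE jacE !stoich_rank1; ring.
have [->|slope_neq0] := eqVneq (net_rate_slope kappa x) 0.
  by rewrite scale0r; apply/negP => /andP[_ /submx0null]; apply/eqP.
by apply/eqmxP; apply: eqmx_scale.
Qed.

(* The Jacobian v w^T has rank one; its only possibly nonzero eigenvalue is w . v. *)
Lemma stableE kappa x : Defs.stable alpha beta kappa x <-> net_rate_slope kappa x < 0.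
Proof.
pose J := map_mx (fun r : R => r%:C%C) (jac alpha beta kappa x).
have uJ (u : 'rV[R[i]]_s.+1) k :
    (u *m J) 0 k = (\sum_i u 0 i * (stoich_gen i)%:C%C) * (net_rate_grad kappa x k)%:C%C.
  rewrite mxE mulr_suml; apply: eq_bigr => i _; rewrite mxE jacE rmorphM; ring.
rewrite /Defs.stable -/J; split=> [[nondeg eig]|slope_lt0].
  move: nondeg; rewrite nondegenerateE => slope_neq0.
  pose w := \row_k (net_rate_grad kappa x k)%:C%C.
  have wJ : w *m J = (net_rate_slope kappa x)%:C%C *: w.
    apply/rowP => k; rewrite uJ !mxE; congr (_ * _).
    by rewrite rmorph_sum; apply: eq_bigr => i _; rewrite mxE rmorphM.
  have w_neq0 : w != 0.
    apply: contra slope_neq0 => /eqP/rowP w0; apply/eqP/big1 => k _.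
    by have := w0 k; rewrite !mxE => /(congr1 (@complex.Re R)) /= ->; rewrite mul0r.
  apply: (eig (net_rate_slope kappa x)%:C%C); first by apply/eigenvalueP; exists w.
  by apply: contra slope_neq0 => /eqP/(congr1 (@complex.Re R)) /= ->.
split=> [|lam /eigenvalueP[u uJl u_neq0] lam_neq0]; first by rewrite nondegenerateE lt_eqF.
set sig := \sum_i u 0 i * (stoich_gen i)%:C%C.
have sig_grad k : sig * (net_rate_grad kappa x k)%:C%C = lam * u 0 k by rewrite -uJ uJl mxE.
have [k0 uk0] : exists k, u 0 k != 0.
  apply/existsP; apply: contraR u_neq0 => /existsPn u0.
  by apply/eqP/rowP => k; rewrite mxE; apply/eqP; have := u0 k; rewrite negbK.
have sig_neq0 : sig != 0.
  apply: contraNneq uk0 => sig0; move: (sig_grad k0); rewrite sig0 mul0r => /esym/eqP.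
  by rewrite mulf_eq0 (negbTE lam_neq0).
have : sig * (net_rate_slope kappa x)%:C%C = \sum_k lam * (u 0 k * (stoich_gen k)%:C%C).
  rewrite /net_rate_slope rmorph_sum mulr_sumr; apply: eq_bigr => k _.
  by rewrite rmorphM mulrA sig_grad; ring.
by rewrite -mulr_sumr -/sig [lam * _]mulrC => /(mulfI sig_neq0) <-.
Qed.

End StoichRankOne.

Section CompatibilityLine.
Variables (R : realType) (s m : nat) (alpha beta : 'M[nat]_(s.+1, m.+1)).
Hypothesis Hlab : stoich R alpha beta ord0 ord0 != 0.
Local Notation v := (stoich_gen R alpha beta).
Implicit Types (kappa : 'cV[R]_m.+1) (c : 'cV[R]_s) (t : R).
Let v0_neq0 : v ord0 != 0 := stoich_gen0_neq0 Hlab.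

(* P_c is the line through class_base c with direction v, parametrized by the
   coordinate t = x_0 / v_0. *)
Definition class_base c : 'cV[R]_s.+1 :=
  \col_i (if unlift ord0 i is Some i' then - c i' 0 / v ord0 else 0).

Definition class_point c t : 'cV[R]_s.+1 := \col_i (class_base c i 0 + t * v i).

Definition class_pos c t : Prop := forall i, 0 < class_point c t i 0.

Definition class_coord_poly c i : {poly R} := (class_base c i 0)%:P + v i *: 'X.

Definition monom_poly c j : {poly R} := \prod_i class_coord_poly c i ^+ alpha i j.

Definition rate_poly kappa c : {poly R} :=
  \sum_j (stoich_coef R alpha beta j * kappa j 0) *: monom_poly c j.

Lemma class_point0 c t : class_point c t ord0 0 = t * v ord0.
Proof. by rewrite !mxE unlift_none add0r. Qed.

Lemma class_pointK c : cancel (class_point c) (fun x => x ord0 0 / v ord0).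
Proof. by move=> t; rewrite class_point0 mulfK. Qed.

Lemma class_point_lift c t i :
  class_point c t (lift ord0 i) 0 = - c i 0 / v ord0 + t * v (lift ord0 i).
Proof. by rewrite !mxE liftK. Qed.

Lemma compat_class_point c t :
  nonneg_vec (class_point c t) -> compat_class alpha beta c (class_point c t).
Proof.
move=> nonneg; split=> // i; rewrite class_point0 class_point_lift.
by rewrite /stoich_gen; field.
Qed.

Lemma compat_classE c x :
  compat_class alpha beta c x -> x = class_point c (x ord0 0 / v ord0).
Proof.
case=> _ cx; apply/matrixP => i j; rewrite (ord1 j).
case: (unliftP ord0 i) => [i'|] ->; last by rewrite class_point0 divfK.
by rewrite class_point_lift -(cx i') /stoich_gen; field.
Qed.

Lemma class_coord_polyE c i t : (class_coord_poly c i).[t] = class_point c t i 0.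
Proof. by rewrite !hornerE [RHS]mxE [t * _]mulrC. Qed.

Lemma rate_polyE kappa c t :
  (rate_poly kappa c).[t] = net_rate alpha beta kappa (class_point c t).
Proof.
rewrite horner_sum; apply: eq_bigr => j _; rewrite hornerZ horner_prod.
by congr (_ * _); apply: eq_bigr => i _; rewrite horner_exp class_coord_polyE.
Qed.

Lemma rate_poly_derivE kappa c t :
  (rate_poly kappa c)^`().[t] = net_rate_slope alpha beta kappa (class_point c t).
Proof.
rewrite raddf_sum horner_sum /net_rate_slope /net_rate_grad.
under [RHS]eq_bigr do rewrite mulr_suml.
rewrite exchange_big /=; apply: eq_bigr => j _.
rewrite derivZ hornerZ deriv_prod_seq ?index_enum_uniq // horner_sum mulr_sumr.
apply: eq_bigr => k _.
rewrite deriv_exp derivD derivC derivZ derivX add0r alg_polyC !hornerE horner_prod.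
rewrite hornerMn hornerM hornerC horner_exp class_coord_polyE -mulr_natr.
under eq_bigr do rewrite horner_exp class_coord_polyE.
have reorder (C V Q A P : R) : C * (V * Q * A) * P = C * A * Q * P * V by ring.
exact: reorder.
Qed.

Lemma class_pos_convex c a b r :
  class_pos c a -> class_pos c b -> a <= r -> r <= b -> class_pos c r.
Proof.
move=> pa pb ar rb i; have := pa i; have := pb i; rewrite !mxE.
by case: (lerP 0 (v i)) => vi; nra.
Qed.

Lemma class_pos_open c t : class_pos c t ->
  exists2 d, 0 < d & forall t', `|t' - t| < d -> class_pos c t'.
Proof.
move=> pos_t.
have [d d_gt0 near] : exists2 d, 0 < d & {in enum 'I_s.+1, forall i,
    forall t', `|t' - t| < d -> 0 < class_point c t' i 0}.
  apply: exists_common_radius => [i d d' _ d'd near t' t'd|i _].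
    by apply: near; apply: lt_le_trans d'd.
  have := pos_t i; rewrite -class_coord_polyE.
  move=> /(poly_cont t (class_coord_poly c i))[d d_gt0 near].
  exists d => // t' /near; rewrite -!class_coord_polyE ltr_norml; lra.
by exists d => // t' t'd i; apply: near; rewrite ?mem_enum.
Qed.

Lemma monom_poly_gt0 c j t : class_pos c t -> 0 < (monom_poly c j).[t].
Proof.
move=> pos_t; rewrite horner_prod; apply: prodr_gt0 => i _.
by rewrite horner_exp class_coord_polyE exprn_gt0.
Qed.

Lemma rate_poly_shift kappa c y :
  rate_poly (kappa + y *: delta_mx ord0 ord0) c = rate_poly kappa c + y *: monom_poly c ord0.
Proof.
rewrite /rate_poly; under eq_bigr do rewrite !mxE mulrDr scalerDl.
rewrite big_split /=; congr (_ + _).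
rewrite (bigD1 ord0) //= big1 ?addr0 => [|j /negbTE j0]; last by rewrite j0 !mulr0 scale0r.
by rewrite stoich_coef0 // mulr1 mul1r.
Qed.

End CompatibilityLine.

Section SteadyStatesOnLine.
Variables (R : realType) (s m : nat) (alpha beta : 'M[nat]_(s.+1, m.+1)).
Hypothesis Hdim : stoich_dim R alpha beta = 1%N.
Hypothesis Hlab : stoich R alpha beta ord0 ord0 != 0.
Implicit Types (kappa : 'cV[R]_m.+1) (c : 'cV[R]_s).

Definition pos_root kappa c : R -> Prop :=
  root_in (class_pos alpha beta c) (rate_poly alpha beta kappa c).

Lemma pos_ss_inE kappa c x : pos_ss_in alpha beta kappa c x <->
  exists2 t, x = class_point alpha beta c t & pos_root kappa c t.
Proof.
split=> [[[[_ ss] pos] cc]|[t -> [pos_t ht]]].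
  have xE := compat_classE Hlab cc; exists (x ord0 0 / stoich_gen R alpha beta ord0) => //.
  split; first by move=> i; rewrite -xE.
  by rewrite rate_polyE -xE; apply/(mass_action_eq0 Hdim Hlab).
have nonneg : nonneg_vec (class_point alpha beta c t) by move=> i; apply/ltW.
split; last exact: compat_class_point.
by split=> //; split=> //; apply/(mass_action_eq0 Hdim Hlab); rewrite -rate_polyE.
Qed.

Lemma stab_pos_ss_inE kappa c x : stab_pos_ss_in alpha beta kappa c x <->
  exists2 t, x = class_point alpha beta c t &
    pos_root kappa c t /\ (rate_poly alpha beta kappa c)^`().[t] < 0.
Proof.
split=> [[/pos_ss_inE[t -> root_t] /(stableE Hdim Hlab)]|[t -> [root_t slope]]].
  by rewrite -rate_poly_derivE => slope; exists t.
split; first by apply/pos_ss_inE; exists t.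
by apply/(stableE Hdim Hlab); rewrite -rate_poly_derivE.
Qed.

Lemma has_card_pos_ss kappa c k :
  has_card (pos_ss_in alpha beta kappa c) k <-> has_card (pos_root kappa c) k.
Proof. exact: has_card_image (class_pointK Hlab c) (pos_ss_inE kappa c). Qed.

Lemma has_card_stab_pos_ss kappa c k :
  has_card (stab_pos_ss_in alpha beta kappa c) k <->
  has_card (fun t => pos_root kappa c t /\ (rate_poly alpha beta kappa c)^`().[t] < 0) k.
Proof. exact: has_card_image (class_pointK Hlab c) (stab_pos_ss_inE kappa c). Qed.

Lemma has_card_stable_roots kappa c S : enumerates (pos_root kappa c) S ->
  has_card (stab_pos_ss_in alpha beta kappa c)
    (count (fun t => (rate_poly alpha beta kappa c)^`().[t] < 0)%R S).
Proof.
move=> rootsS; apply/has_card_stab_pos_ss/has_cardP.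
by eexists; [exact: enumerates_filter rootsS | rewrite size_filter].
Qed.

Section FiniteCapacity.
Variable Npos : nat.
Hypothesis Hcap : cap_pos_is R alpha beta Npos.

Lemma enum_pos_roots kappa c : pos_vec kappa ->
  exists2 S, enumerates (pos_root kappa c) S & (size S <= Npos)%N.
Proof.
move=> kappa_gt0; have [fin [_ le_N]] := Hcap.
have [k card_k] : exists k, has_card (pos_ss_in alpha beta kappa c) k.
  by apply: NNPP => no_card; apply: fin; exists kappa, c.
have /has_card_pos_ss/has_cardP[S rootsS sizeS] := card_k.
by exists S; rewrite // sizeS; apply: le_N; exists kappa, c.
Qed.

Lemma exists_simple_max_config : exists kappa c S,
  [/\ pos_vec kappa, enumerates (pos_root kappa c) S, size S = Npos
    & {in S, forall t, (rate_poly alpha beta kappa c)^`().[t] != 0}].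
Proof.
have [_ [[kappa0 [c [kappa0_gt0 card0]]] le_N]] := Hcap.
have /has_card_pos_ss/has_cardP[S0 roots0 size0] := card0.
have [S0E|S0_neq0] := eqVneq S0 [::]; first by exists kappa0, c, S0; split=> //; rewrite S0E.
have [y [y_small [L [uL sizeL] rootsL] simple]] :=
  perturb_to_simple_roots (@class_pos_convex _ _ _ alpha beta c)
    (@class_pos_open _ _ _ alpha beta c)
    (monom_poly_gt0 ord0) roots0 S0_neq0 (kappa0_gt0 ord0).
pose kappa := kappa0 + y *: delta_mx ord0 ord0.
have kappa_gt0 : pos_vec kappa.
  move=> j; rewrite !mxE; case: (eqVneq j ord0) => [->|j0] /=.
    by move: y_small; rewrite mulr1 ltr_norml; lra.
  by rewrite mulr0 addr0.
have [S rootsS sizeS] := enum_pos_roots c kappa_gt0.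
exists kappa, c, S; split=> // [|t /rootsS.2]; last first.
  by rewrite /pos_root (rate_poly_shift Hlab) => /simple.
apply/eqP; rewrite eqn_leq sizeS -size0 (leq_trans sizeL) //.
apply: uniq_leq_size uL _ => t /rootsL; rewrite -(rate_poly_shift Hlab) => root_t.
exact/rootsS.2.
Qed.

Lemma exists_cap_stab : exists K, cap_stab_is R alpha beta K.
Proof.
have [fin [[kappa0 [c0 [kappa0_gt0 _]]] _]] := Hcap.
have stab_count kappa c : pos_vec kappa -> exists2 S, (size S <= Npos)%N &
    has_card (stab_pos_ss_in alpha beta kappa c)
      (count (fun t => (rate_poly alpha beta kappa c)^`().[t] < 0)%R S).
  by move=> /(enum_pos_roots c)[S rootsS sizeS]; exists S => //; exact: has_card_stable_roots.
have bound k : admits (stab_pos_ss_in (R:=R) alpha beta) k -> (k <= Npos)%N.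
  case=> kappa [c [kappa_gt0 card_k]]; have [S sizeS card_S] := stab_count kappa c kappa_gt0.
  by rewrite (has_card_unique card_k card_S); apply: leq_trans (count_size _ _) sizeS.
have [S0 _ card0] := stab_count kappa0 c0 kappa0_gt0.
have [K admK maxK] : exists2 K, admits (stab_pos_ss_in (R:=R) alpha beta) K &
    forall k, admits (stab_pos_ss_in (R:=R) alpha beta) k -> (k <= K)%N.
  by apply: exists_max_nat bound; eexists; exists kappa0, c0; exact: (conj kappa0_gt0 card0).
exists K; split=> //; case=> kappa [c [kappa_gt0 no_card]].
by have [S _ card_S] := stab_count kappa c kappa_gt0; exact: no_card (ex_intro _ _ card_S).
Qed.

End FiniteCapacity.
End SteadyStatesOnLine.

Unset Implicit Arguments.

Theorem corollary3p2 (R : realType) (s m : nat)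
  (alpha beta : 'M[nat]_(s.+1, m.+1))
  (Hnet : is_network alpha beta)
  (Hdim : stoich_dim R alpha beta = 1%N)
  (Hlab : stoich R alpha beta ord0 ord0 != 0)
  (Npos : nat) (Hcap : cap_pos_is R alpha beta Npos) :
  exists (kappa : 'cV[R]_m.+1) (c : 'cV[R]_s) (Nstab : nat),
    [/\ pos_vec kappa,
        has_card (pos_ss_in alpha beta kappa c) Npos,
        has_card (stab_pos_ss_in alpha beta kappa c) Nstab
      & cap_stab_is R alpha beta Nstab].
Proof.
have [kappa1 [c1 [S1 [kappa1_gt0 roots1 size1 simple1]]]] :=
  exists_simple_max_config Hdim Hlab Hcap.
have [K capK] := exists_cap_stab Hdim Hlab Hcap.
have card1 := has_card_stable_roots Hdim Hlab roots1; set s1 := count _ S1 in card1.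
have Npos_le : (Npos <= s1.*2.+1)%N.
  by rewrite -size1; apply: size_roots_le_stable roots1 simple1; apply: class_pos_convex.
have [s1K|s1_neq_K] := eqVneq s1 K.
  exists kappa1, c1, s1; split=> //; last by rewrite s1K.
  by apply/(has_card_pos_ss Hdim Hlab)/has_cardP; exists S1.
have [_ [[kappaK [cK [kappaK_gt0 cardK]]] maxK]] := capK.
have s1_lt_K : (s1 < K)%N by rewrite ltn_neqAle s1_neq_K maxK //; exists kappa1, c1.
have [SK rootsK sizeK] := enum_pos_roots Hdim Hlab Hcap cK kappaK_gt0.
have KE := has_card_unique cardK (has_card_stable_roots Hdim Hlab rootsK).
have := count_stable_roots_le (@class_pos_convex _ _ _ alpha beta cK) rootsK.
rewrite -KE => K_le; exists kappaK, cK, K; split=> //.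
apply/(has_card_pos_ss Hdim Hlab)/has_cardP; exists SK => //.
apply/eqP; rewrite eqn_leq sizeK (leq_trans Npos_le) // -ltnS -doubleS.
by apply: leq_trans K_le; rewrite leq_double.
Qed.
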